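(* Let $f\in S$ be nonzero. Then, inside $\mathrm{Der}_{\mathbb K}(S^h)$, $$D(f^h)\cap S^h\langle\partial_{x_1},\dots,\partial_{x_n}\rangle=D(f)^h.$$
   Context: $\mathbb K$ a field of characteristic zero, $S=\mathbb K[x_1,\dots,x_n]$, $S^h=\mathbb K[x_1,\dots,x_n,h]$ with the standard grading by total degree. For any polynomial ring $R$ over $\mathbb K$, $\mathrm{Der}_{\mathbb K}(R)$ is the free $R$-module on the partial derivatives; for $g\in R$, $e\ge1$, $D(g;e)=\{\delta:\delta(g)\in g^eR\}$, and for nonzero $F=cF_1^{e_1}\cdots F_r^{e_r}$ (pairwise non-associate irreducibles, $c\in\mathbb K^*$), $D(F)=\bigcap_iD(F_i;e_i)$; this defines $D(f)\subseteq\mathrm{Der}_{\mathbb K}(S)$ and $D(f^h)\subseteq\mathrm{Der}_{\mathbb K}(S^h)$ (basis $\partial_{x_1},\dots,\partial_{x_n},\partial_h$). For nonzero $g\in S$ of degree $e$, $g^h=h^e g(x_1/h,\dots,x_n/h)$. For nonzero $\delta=\sum_{i=1}^n a_i\partial_{x_i}\in\mathrm{Der}_{\mathbb K}(S)$ with $e=\max_i\deg a_i$, $\delta^h=\sum_{a_i\neq0}h^{e-\deg a_i}a_i^h\,\partial_{x_i}$. $D(f)^h$ is the $S^h$-submodule of $S^h\langle\partial_{x_1},\dots,\partial_{x_n}\rangle$ generated by $\{\delta^h:\ 0\ne\delta\in D(f)\}$. *)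

From mathcomp Require Import all_boot all_order all_algebra.
From mathcomp Require Import mpoly.
Set Implicit Arguments. Unset Strict Implicit. Unset Printing Implicit Defensive.
Import GRing.Theory.
Local Open Scope ring_scope.

Section Defs.
Variable K : fieldType.

(* A derivation of K[x_0..x_{k-1}]: its coordinates on the basis of partials. *)
Definition Der (k : nat) := 'I_k -> {mpoly K[k]}.

Definition der_nonzero k (d : Der k) : Prop := exists i, d i != 0.

Definition der_app k (d : Der k) (g : {mpoly K[k]}) : {mpoly K[k]} :=
  \sum_(i < k) d i * mderiv i g.

Definition mdvd k (p q : {mpoly K[k]}) : Prop := exists r, q = p * r.

Definition mirreducible k (g : {mpoly K[k]}) : Prop :=
  g != 0 /\ g \notin GRing.unit /\
  forall a b : {mpoly K[k]}, g = a * b -> a \in GRing.unit \/ b \in GRing.unit.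

Definition inDe k (g : {mpoly K[k]}) (e : nat) (d : Der k) : Prop :=
  mdvd (g ^+ e) (der_app d g).

(* D(F) = intersection of D(F_i; e_i) over the irreducible factors F_i of F,
   e_i being the exact multiplicity of F_i in F. *)
Definition inD k (F : {mpoly K[k]}) (d : Der k) : Prop :=
  forall (g : {mpoly K[k]}) (e : nat), mirreducible g -> (0 < e)%N ->
    mdvd (g ^+ e) F -> ~ mdvd (g ^+ e.+1) F -> inDe g e d.

Definition tdeg k (p : {mpoly K[k]}) : nat := (msize p).-1.

(* x_i in S^h = K[x_0..x_{n-1}, h]; h is the last variable ord_max *)
Definition xvar n (i : 'I_n) : {mpoly K[n.+1]} := 'X_(widen_ord (leqnSn n) i).
Definition hvar n : {mpoly K[n.+1]} := 'X_(@ord_max n).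

(* g^h = h^{deg g} g(x/h) *)
Definition homogp n (g : {mpoly K[n]}) : {mpoly K[n.+1]} :=
  \sum_(m <- msupp g)
     g@_m *: ((\prod_(i < n) xvar i ^+ m i) * hvar n ^+ (tdeg g - mdeg m)).

Definition der_homog n (d : Der n) : Der n.+1 :=
  fun j => match unlift ord_max j with
           | Some i => hvar n ^+ (\max_(i' < n) tdeg (d i') - tdeg (d i)) * homogp (d i)
           | None => 0
           end.

(* membership in D(f)^h: S^h-linear combination of delta^h, 0 != delta in D(f) *)
Definition inDh n (f : {mpoly K[n]}) (t : Der n.+1) : Prop :=
  exists (N : nat) (c : 'I_N -> {mpoly K[n.+1]}) (ds : 'I_N -> Der n),
    (forall l, der_nonzero (ds l) /\ inD f (ds l)) /\
    forall j, t j = \sum_(l < N) c l * der_homog (ds l) j.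

End Defs.

From HB Require Import structures.
From mathcomp Require Import all_boot all_order all_algebra.
From mathcomp Require Import mpoly.
From mathcomp Require Import zify.
Set Implicit Arguments. Unset Strict Implicit. Unset Printing Implicit Defensive.
Import GRing.Theory.
Local Open Scope ring_scope.

(* Dehomogenization (h := 1) is a ring morphism that commutes with the
   partials d/dx_i and inverts homogenization, and every homogeneous
   polynomial is h^k g^h with g its dehomogenization. As h does not divide
   f^h and factors of homogeneous polynomials are homogeneous, the irreducible
   factors of f^h are the g^h with g an irreducible factor of f, with the same
   multiplicities; then delta^h(g^h) = h^k (delta g)^h gives D(f)^h <= D(f^h).
   Conversely D(f^h) is stable under taking homogeneous components, its
   defining divisors being homogeneous. A homogeneous t in D(f^h) without
   d/dh component dehomogenizes to some delta in D(f) with t = h^k delta^h,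
   and t is the sum of its components. *)

Section LinearExtension.
Variables (K : fieldType) (k : nat) (V : lmodType K) (F : 'X_{1..k} -> V).

Definition mlinext (p : {mpoly K[k]}) : V := \sum_(m <- msupp p) p@_m *: F m.

Lemma mlinext_seqE p (r : seq 'X_{1..k}) : uniq r -> {subset msupp p <= r} ->
  mlinext p = \sum_(m <- r) p@_m *: F m.
Proof.
move=> ur sub; rewrite [RHS](bigID (mem (msupp p))) /=.
rewrite [X in _ = _ + X]big1 ?addr0; last first.
  by move=> m /memN_msupp_eq0 ->; rewrite scale0r.
rewrite -big_filter; apply: perm_big; apply: uniq_perm.
- exact: msupp_uniq.
- exact: filter_uniq.
by move=> m; rewrite mem_filter /=; apply/idP/andP => [pm|[]//]; split=> //; apply: sub.
Qed.

Lemma mlinext_is_linear : linear mlinext.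
Proof.
move=> c p q /=.
set r := undup (msupp p ++ msupp q ++ msupp (c *: p + q)).
have ur : uniq r by apply: undup_uniq.
rewrite (@mlinext_seqE _ r) //; last by move=> m pm; rewrite mem_undup !mem_cat pm !orbT.
rewrite (@mlinext_seqE p r) //; last by move=> m pm; rewrite mem_undup !mem_cat pm.
rewrite (@mlinext_seqE q r) //; last by move=> m pm; rewrite mem_undup !mem_cat pm !orbT.
rewrite scaler_sumr -big_split /=; apply: eq_bigr => m _.
by rewrite mcoeffD mcoeffZ scalerDl scalerA.
Qed.

HB.instance Definition _ :=
  GRing.isLinear.Build K {mpoly K[k]} V _ mlinext mlinext_is_linear.

Lemma mlinextX m : mlinext 'X_[m] = F m.
Proof. by rewrite /mlinext msuppX big_seq1 mcoeffX eqxx scale1r. Qed.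

End LinearExtension.

Lemma linear_mpoly_eq (K : fieldType) k (V : lmodType K)
    (L1 L2 : {linear {mpoly K[k]} -> V}) :
  (forall m, L1 'X_[m] = L2 'X_[m]) -> L1 =1 L2.
Proof.
by move=> eqX p; rewrite [p]mpolyE !linear_sum; apply: eq_bigr => m _; rewrite !linearZ eqX.
Qed.

Section Graded.
Variables (R : idomainType) (k : nat).
Implicit Types (p q a b : {mpoly R[k]}).

Lemma mlastcM p q : (p * q)@_(mlast p + mlast q) = p@_(mlast p) * q@_(mlast q).
Proof.
have [->|nz_p] := eqVneq p 0; first by rewrite !mul0r !mcoeff0 mul0r.
have [->|nz_q] := eqVneq q 0; first by rewrite !mulr0 !mcoeff0 mulr0.
rewrite mpolyME (bigD1_seq (mlast p, mlast q)) /=; first last.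
- by rewrite allpairs_uniq ?msupp_uniq // => -[? ?] [].
- by rewrite allpairs_f // mlast_supp.
rewrite mcoeffD mcoeffZ mcoeffX eqxx mulr1.
rewrite big_seq_cond raddf_sum /= big1 ?addr0 //.
case=> y1 y2 /andP [/allpairsP [[m1 m2] /= [m1p m2q [-> ->]]] ne].
rewrite mcoeffZ mcoeffX.
suff lt : ((mlast p + mlast q)%MM < (m1 + m2)%MM)%O.
  by rewrite (Order.POrderTheory.gt_eqF lt) mulr0.
move: (mlast_lemc m1p); rewrite Order.POrderTheory.le_eqVlt => /predU1P[E1|lt1];
  last exact: ltmc_le_add lt1 (mlast_lemc m2q).
move: (mlast_lemc m2q); rewrite Order.POrderTheory.le_eqVlt => /predU1P[E2|lt2].
  by move: ne; rewrite E1 E2 eqxx.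
by rewrite E1; apply: lemc_lt_add.
Qed.

(* The extreme monomials of [a * b] are the sums of those of [a] and [b], and
   both have degree [d]; so the top and bottom degrees of [a] agree. *)
Lemma dhomog_factor p a b d :
  p != 0 -> p \is d.-homog -> p = a * b -> a \is (mdeg (mlead a)).-homog.
Proof.
move=> nz_p /dhomogP p_d pE.
have nz_a : a != 0 by apply: contraNneq nz_p => a0; rewrite pE a0 mul0r.
have nz_b : b != 0 by apply: contraNneq nz_p => b0; rewrite pE b0 mulr0.
have top : (mdeg (mlead a) + mdeg (mlead b))%N = d.
  by rewrite -mdegD -(mleadM nz_a nz_b) -pE p_d ?mlead_supp.
have bot : (mdeg (mlast a) + mdeg (mlast b))%N = d.
  rewrite -mdegD p_d // mcoeff_msupp pE mlastcM.
  by rewrite mulf_neq0 // -mcoeff_msupp mlast_supp.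
have la := lemc_mdeg (mlast_lemc (mlead_supp nz_a)).
have lb := lemc_mdeg (mlast_lemc (mlead_supp nz_b)).
apply/dhomogP => m am.
change (mdeg m = mdeg (mlead a)).
have := lemc_mdeg (mlast_lemc am); have := lemc_mdeg (msupp_le_mlead am); lia.
Qed.

Lemma mderiv_homog (j : 'I_k) d p : p \is d.-homog -> mderiv j p \is d.-1.-homog.
Proof.
move=> /dhomogP p_d; rewrite [p]mpolyE raddf_sum /= big_seq; apply: rpred_sum => m pm.
rewrite mderivZ mderivX; apply: rpredZ.
have [->|nz] := eqVneq (m j) 0%N; first by rewrite scale0r rpred0.
apply: rpredZ; rewrite dhomogX; apply/eqP.
have mE : (m - U_(j) + U_(j))%MM = m.
  apply/mnmP => i; rewrite mnmDE mnmBE mnm1E.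
  by case: eqP => [<-|_]; rewrite ?subn0 ?addn0 // subnK // lt0n.
have m_d : mdeg m = d := p_d m pm.
change (mdeg (m - U_(j))%MM = d.-1).
by rewrite -m_d -{2}mE mdegD mdeg1 addn1.
Qed.

Lemma pihomog_mul e c p q : q \is c.-homog ->
  pihomog mdeg e (p * q) = (if (c <= e)%N then pihomog mdeg (e - c) p else 0) * q.
Proof.
move=> q_c.
have mq_homog m : 'X_[m] * q \is (mdeg m + c).-homog by rewrite dhomogM ?dhomogX.
rewrite [p]mpolyE mulr_suml !raddf_sum /=; case: ifP => ce; last first.
  rewrite mul0r big1 // => m _; rewrite -scalerAl linearZ /=.
  rewrite (pihomog_ne0 _ (mq_homog m)) ?scaler0 //.
  by apply: contraFneq ce => <-; rewrite leq_addl.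
rewrite mulr_suml; apply: eq_bigr => m _.
rewrite -scalerAl !linearZ -scalerAl /= pihomogX; congr (_ *: _).
have [me|] := eqVneq (mdeg m) (e - c)%N.
  by rewrite pihomog_dE // -(subnK ce) -me mq_homog.
move=> ne; rewrite mul0r (pihomog_ne0 _ (mq_homog m)) //.
by apply: contraNneq ne => <-; rewrite addnK.
Qed.

End Graded.

Section Derivations.
Variables (K : fieldType) (k : nat).
Implicit Types (p q : {mpoly K[k]}).

Lemma mdvd_mull p q c : mdvd p q -> mdvd p (c * q).
Proof. by move=> [r ->]; exists (c * r); rewrite mulrCA. Qed.

Lemma mdvd_sum p I (r : seq I) (F : I -> {mpoly K[k]}) :
  (forall i, mdvd p (F i)) -> mdvd p (\sum_(i <- r) F i).
Proof.
move=> dvdF; elim: r => [|x r [q IH]]; first by exists 0; rewrite big_nil mulr0.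
by have [q' E] := dvdF x; exists (q' + q); rewrite big_cons mulrDr -E -IH.
Qed.

Lemma der_app_comb N (c : 'I_N -> {mpoly K[k]}) (ds : 'I_N -> Der K k) (t : Der K k) g :
  (forall j, t j = \sum_(l < N) c l * ds l j) ->
  der_app t g = \sum_(l < N) c l * der_app (ds l) g.
Proof.
move=> tE; rewrite /der_app; under eq_bigr => j _ do rewrite tE mulr_suml.
rewrite exchange_big /=; apply: eq_bigr => l _; rewrite mulr_sumr.
by apply: eq_bigr => j _; rewrite mulrA.
Qed.

Lemma inD_comb F N (c : 'I_N -> {mpoly K[k]}) (ds : 'I_N -> Der K k) (t : Der K k) :
  (forall l, inD F (ds l)) -> (forall j, t j = \sum_(l < N) c l * ds l j) -> inD F t.
Proof.
move=> dsF tE g e g_irr e_gt0 dvd ndvd; rewrite /inDe (der_app_comb _ tE).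
by apply: mdvd_sum => l; apply/mdvd_mull/dsF.
Qed.

Definition der_pihomog (t : Der K k) (d : nat) : Der K k := fun j => pihomog mdeg d (t j).

Lemma der_pihomog_partition (t : Der K k) :
  exists B, forall j, t j = \sum_(d < B) der_pihomog t d j.
Proof.
exists (\max_(j < k) msize (t j)) => j.
exact: (pihomog_partitionE (leq_bigmax (F := fun j => msize (t j)) j)).
Qed.

(* The divisors [g ^+ e] defining [D(F)] are factors of [F], hence
   homogeneous; so [(der_pihomog t d)(g)] is a homogeneous component of
   [t(g)], and is still divisible by [g ^+ e]. *)
Lemma inD_der_pihomog F D (t : Der K k) d :
  F != 0 -> F \is D.-homog -> inD F t -> inD F (der_pihomog t d).
Proof.
move=> nz_F F_D Ft g e g_irr e_gt0 dvd ndvd.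
have g_homog : g \is (mdeg (mlead g)).-homog.
  have [r FE] := dvd; apply: (dhomog_factor nz_F F_D (b := g ^+ e.-1 * r)).
  by rewrite FE mulrA -exprS prednK.
set c := mdeg (mlead g) in g_homog.
have [q qE] := Ft g e g_irr e_gt0 dvd ndvd; rewrite /inDe.
have -> : der_app (der_pihomog t d) g = pihomog mdeg (d + c.-1) (der_app t g).
  rewrite /der_app raddf_sum; apply: eq_bigr => j _ /=.
  by rewrite (pihomog_mul _ _ (mderiv_homog j g_homog)) leq_addl addnK.
rewrite qE mulrC (pihomog_mul _ _ (dhomogMn e g_homog)).
by eexists; rewrite mulrC.
Qed.

End Derivations.

Section Homogenization.
Variables (K : fieldType) (n : nat).
Local Notation S := {mpoly K[n]}.
Local Notation T := {mpoly K[n.+1]}.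
Local Notation wi := (widen_ord (leqnSn n)).
Implicit Types (g a b : S) (p q : T).

Lemma lift_max_wi (i : 'I_n) : lift ord_max i = wi i.
Proof. by apply/val_inj; rewrite /= /bump leqNgt ltn_ord. Qed.

Lemma unlift_wi (i : 'I_n) : unlift ord_max (wi i) = Some i.
Proof. by rewrite -lift_max_wi liftK. Qed.

Lemma widen_ord_eq (i j : 'I_n) : (wi i == wi j) = (i == j).
Proof. by rewrite -val_eqE /= val_eqE. Qed.

Definition mdrop (m : 'X_{1..n.+1}) : 'X_{1..n} := [multinom m (wi i) | i < n].

Definition mext (mu : 'X_{1..n}) (e : nat) : 'X_{1..n.+1} :=
  [multinom (if unlift ord_max j is Some i then mu i else e) | j < n.+1].

Lemma mext_wi mu e i : mext mu e (wi i) = mu i.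
Proof. by rewrite mnmE unlift_wi. Qed.

Lemma mext_max mu e : mext mu e ord_max = e.
Proof. by rewrite mnmE unlift_none. Qed.

Lemma mdrop_mext mu e : mdrop (mext mu e) = mu.
Proof. by apply/mnmP => i; rewrite mnmE mext_wi. Qed.

Lemma mext_mdrop m : mext (mdrop m) (m ord_max) = m.
Proof.
by apply/mnmP => j; rewrite mnmE; case: unliftP => [i ->|-> //]; rewrite mnmE lift_max_wi.
Qed.

Lemma mdeg_mdrop m : mdeg m = (mdeg (mdrop m) + m ord_max)%N.
Proof.
rewrite !mdegE big_ord_recr /=; congr (_ + _)%N.
by apply: eq_bigr => i _; rewrite mnmE.
Qed.

Lemma mdeg_mext mu e : mdeg (mext mu e) = (mdeg mu + e)%N.
Proof. by rewrite mdeg_mdrop mdrop_mext mext_max. Qed.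

Lemma mdrop_max : mdrop U_(ord_max) = 0%MM.
Proof.
apply/mnmP => j; rewrite !mnmE; case: eqP => // E.
have := ltn_ord j; have -> : (j : nat) = val (wi j) by [].
by rewrite -E /= ltnn.
Qed.

Lemma mdropB m i : mdrop (m - U_(wi i)) = (mdrop m - U_(i))%MM.
Proof. by apply/mnmP => j; rewrite mnmE (mnmBE (wi j)) (mnmBE j) !mnmE widen_ord_eq. Qed.

Lemma mpolyX_mext mu e :
  'X_[mext mu e] = (\prod_(i < n) xvar K i ^+ mu i) * hvar K n ^+ e :> T.
Proof.
rewrite mpolyXE_id big_ord_recr /= mext_max; congr (_ * _).
by apply: eq_bigr => i _; rewrite mext_wi.
Qed.

Lemma hvarM_mext mu e : hvar K n * 'X_[mext mu e] = 'X_[mext mu e.+1].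
Proof.
rewrite /hvar -mpolyXD; congr 'X_[_]; apply/mnmP => j.
rewrite mnmDE !mnmE; case: unliftP => [i ->|->]; last by rewrite eqxx.
by rewrite (negbTE (neq_lift _ _)).
Qed.

Lemma hvarXn_homog e : hvar K n ^+ e \is e.-homog.
Proof.
have := dhomogMn e (_ : hvar K n \is 1.-homog); rewrite mul1n; apply.
by rewrite dhomogX; apply/eqP; exact: mdeg1.
Qed.

Definition dehomog (p : T) : S :=
  comp_mpoly [tuple (if unlift ord_max j is Some i then 'X_i else 1) | j < n.+1] p.
HB.instance Definition _ := GRing.Linear.copy dehomog (comp_mpoly _).
HB.instance Definition _ := GRing.RMorphism.copy dehomog (comp_mpoly _).

Lemma dehomogX m : dehomog 'X_[m] = 'X_[mdrop m].
Proof.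
rewrite /dehomog comp_mpolyX big_ord_recr /= tnth_mktuple unlift_none expr1n mulr1.
by rewrite [RHS]mpolyXE_id; apply: eq_bigr => i _; rewrite tnth_mktuple unlift_wi mnmE.
Qed.

Lemma dehomog_hvar : dehomog (hvar K n) = 1.
Proof. by rewrite dehomogX mdrop_max mpolyX0. Qed.

Lemma dehomog_mderiv i p : dehomog (mderiv (wi i) p) = mderiv i (dehomog p).
Proof.
apply: (@linear_mpoly_eq K n.+1 _ (dehomog \o mderiv (wi i)) (mderiv i \o dehomog)) => m /=.
by rewrite mderivX linearZ /= !dehomogX mderivX mdropB mnmE.
Qed.

(* [homogenize d g] is [h^d g(x/h)] only when [deg g <= d]: the exponent
   [d - mdeg mu] below is truncated. *)
Definition homogenize (d : nat) : {linear S -> T} :=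
  mlinext (fun mu => 'X_[mext mu (d - mdeg mu)] : T).

Lemma homogenizeX d mu : homogenize d 'X_[mu] = 'X_[mext mu (d - mdeg mu)].
Proof. exact: mlinextX. Qed.

Lemma homogpE g : homogp g = homogenize (tdeg g) g.
Proof. by apply: eq_bigr => mu _; rewrite mpolyX_mext. Qed.

Lemma homogenizeK d : cancel (homogenize d) dehomog.
Proof.
move=> g; rewrite [in RHS](mpolyE g) /= /mlinext linear_sum; apply: eq_bigr => mu _.
by rewrite linearZ /= dehomogX mdrop_mext.
Qed.

Lemma homogenize_homog d g : (msize g <= d.+1)%N -> homogenize d g \is d.-homog.
Proof.
move=> g_d; rewrite /= /mlinext big_seq; apply: rpred_sum => mu g_mu.
rewrite dhomogZ // dhomogX; apply/eqP; change (mdeg (mext mu (d - mdeg mu)) = d).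
rewrite mdeg_mext subnKC //.
by rewrite -ltnS (leq_trans (msize_mdeg_lt g_mu)).
Qed.

Lemma hvarXnM_homogenize e d g : (msize g <= d.+1)%N ->
  hvar K n ^+ e * homogenize d g = homogenize (d + e) g.
Proof.
move=> g_d; rewrite /= /mlinext mulr_sumr !big_seq; apply: eq_bigr => mu g_mu.
rewrite -scalerAr; congr (_ *: _).
have mu_d : (mdeg mu <= d)%N by rewrite -ltnS (leq_trans (msize_mdeg_lt g_mu)).
rewrite addnC -addnBA //; elim: e => [|e IH]; first by rewrite expr0 mul1r.
by rewrite exprS -mulrA IH hvarM_mext addSn.
Qed.

Lemma dehomogK d p : p \is d.-homog -> homogenize d (dehomog p) = p.
Proof.
move=> /dhomogP p_d.
have -> : dehomog p = \sum_(m <- msupp p) p@_m *: 'X_[mdrop m].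
  by rewrite {1}[p]mpolyE linear_sum; apply: eq_bigr => m _; rewrite linearZ /= dehomogX.
rewrite linear_sum [RHS]mpolyE !big_seq; apply: eq_bigr => m pm.
have m_d : mdeg m = d := p_d m pm.
by rewrite linearZ /= homogenizeX -m_d (mdeg_mdrop m) addKn mext_mdrop.
Qed.

Lemma msize_dehomog d p : p \is d.-homog -> (msize (dehomog p) <= d.+1)%N.
Proof.
move=> /dhomogP p_d; rewrite [p]mpolyE linear_sum /=.
apply: leq_trans (msize_sum _ _ _) _; apply/bigmax_leqP_seq => m pm _.
rewrite linearZ /=; apply: leq_trans (msizeZ_le _ _) _.
have m_d : mdeg m = d := p_d m pm.
by rewrite dehomogX msizeX ltnS -m_d (mdeg_mdrop m) leq_addr.
Qed.

Lemma tdeg_dehomog d p : p \is d.-homog -> (tdeg (dehomog p) <= d)%N.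
Proof. by move=> /msize_dehomog p_d; rewrite /tdeg -subn1 leq_subLR add1n. Qed.

Lemma dhomog_homogpE d p : p \is d.-homog ->
  p = hvar K n ^+ (d - tdeg (dehomog p)) * homogp (dehomog p).
Proof.
move=> p_d; rewrite homogpE hvarXnM_homogenize ?leqSpred //.
by rewrite addnC subnK ?tdeg_dehomog // dehomogK.
Qed.

Lemma homogp_homog g : homogp g \is (tdeg g).-homog.
Proof. by rewrite homogpE homogenize_homog ?leqSpred. Qed.

Lemma homogpK : cancel (@homogp K n) dehomog.
Proof. by move=> g; rewrite homogpE homogenizeK. Qed.

Lemma homogpC c : homogp (c%:MP : S) = c%:MP.
Proof.
rewrite homogpE /tdeg msizeC -[c%:MP]mulr1 mul_mpolyC -mpolyX0 linearZ /= homogenizeX mdeg0.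
have -> : ((c != 0) : nat).-1 = 0%N by case: (c != 0).
have -> : mext 0%MM 0 = 0%MM.
  by apply/mnmP => j; rewrite !mnmE; case: unlift => [i|]; rewrite ?mnm0E.
by rewrite mpolyX0 -mul_mpolyC mulr1.
Qed.

Lemma homogp_eq0 g : (homogp g == 0) = (g == 0).
Proof.
apply/eqP/eqP => [g0|->]; last by rewrite -mpolyC0 homogpC.
by rewrite -(homogpK g) g0 rmorph0.
Qed.

Lemma homogpM a b : homogp (a * b) = homogp a * homogp b.
Proof.
have [->|nz_a] := eqVneq a 0; first by rewrite mul0r -mpolyC0 homogpC mul0r.
have [->|nz_b] := eqVneq b 0; first by rewrite mulr0 -mpolyC0 homogpC mulr0.
rewrite [RHS](dhomog_homogpE (dhomogM (homogp_homog a) (homogp_homog b))).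
rewrite rmorphM /= !homogpK.
suff -> : tdeg (a * b) = (tdeg a + tdeg b)%N by rewrite subnn expr0 mul1r.
rewrite /tdeg (msizeM nz_a nz_b).
move: nz_a nz_b; rewrite -!msize_poly_eq0.
by case: (msize a) => // x _; case: (msize b) => // y _; rewrite addSn addnS.
Qed.

Lemma homogpX a e : homogp (a ^+ e) = homogp a ^+ e.
Proof.
elim: e => [|e IH]; first by rewrite !expr0 -mpolyC1 homogpC.
by rewrite !exprS homogpM IH.
Qed.

Lemma homogp_unit g : (homogp g \in GRing.unit) = (g \in GRing.unit).
Proof.
apply/idP/idP => [/(rmorph_unit dehomog)|]; first by rewrite /= homogpK.
by move=> /andP [/eqP gE u]; rewrite gE homogpC; apply/andP; rewrite mcoeffC eqxx mulr1.
Qed.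

Lemma mdvd_homogp g1 g2 : mdvd (homogp g1) (homogp g2) <-> mdvd g1 g2.
Proof.
split=> [[r E]|[r ->]]; last by exists (homogp r); rewrite homogpM.
by exists (dehomog r); rewrite -(homogpK g2) E rmorphM /= homogpK.
Qed.

Lemma mcoeff_hvarM q (m : 'X_{1..n.+1}) : m ord_max = 0%N -> (hvar K n * q)@_m = 0.
Proof.
move=> m0; apply/eqP; rewrite mcoeff_eq0 mulrC /hvar (perm_mem (msuppMX _ _)).
by apply/mapP => -[m' _ E]; move: m0; rewrite E mnmDE mnm1E eqxx.
Qed.

Lemma mcoeff_homogp_mlead g : g != 0 -> (homogp g)@_(mext (mlead g) 0) = g@_(mlead g).
Proof.
move=> nz_g; rewrite homogpE /= /mlinext raddf_sum /=.
have tdegE : tdeg g = mdeg (mlead g) by rewrite /tdeg -(mlead_deg nz_g).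
rewrite (bigD1_seq (mlead g)) ?msupp_uniq ?mlead_supp //=.
rewrite mcoeffZ mcoeffX tdegE subnn eqxx mulr1 big1 ?addr0 // => mu neq.
rewrite mcoeffZ mcoeffX; case: eqP => [E|]; last by rewrite mulr0.
by move: neq; rewrite -(mdrop_mext mu (mdeg (mlead g) - mdeg mu)) E mdrop_mext eqxx.
Qed.

Lemma hvar_ndvd_homogp g q : g != 0 -> homogp g != hvar K n * q.
Proof.
move=> nz_g; apply/eqP => E; have := mcoeff_homogp_mlead nz_g.
rewrite E mcoeff_hvarM ?mext_max // => /esym /eqP.
by rewrite mcoeff_eq0 mlead_supp.
Qed.

(* A factor of [homogp g] is homogeneous, hence [h^e] times a homogenization;
   [e = 0] since [h] does not divide [homogp g]. *)
Lemma homogp_factor g p q : g != 0 -> homogp g = p * q -> p = homogp (dehomog p).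
Proof.
move=> nz_g E.
have nz_gh : homogp g != 0 by rewrite homogp_eq0.
have := dhomog_homogpE (dhomog_factor nz_gh (homogp_homog g) E).
set e := (_ - _)%N; case: e => [|e] pE; first by rewrite {1}pE expr0 mul1r.
have := hvar_ndvd_homogp (hvar K n ^+ e * homogp (dehomog p) * q) nz_g.
by rewrite E {1}pE exprS !mulrA eqxx.
Qed.

Lemma mirreducible_homogp g : mirreducible (homogp g) <-> mirreducible g.
Proof.
split=> [[nz_g [nu irr]]|[nz_g [nu irr]]].
  split; first by rewrite -homogp_eq0.
  split; first by rewrite -homogp_unit.
  by move=> a b E; rewrite -!homogp_unit; apply: irr; rewrite E homogpM.
split; first by rewrite homogp_eq0.
split; first by rewrite homogp_unit.
move=> a b E.
have aE := homogp_factor nz_g E.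
have bE : b = homogp (dehomog b) by apply: (homogp_factor nz_g); rewrite E mulrC.
rewrite aE bE !homogp_unit; apply: irr.
by rewrite -rmorphM /= -E homogpK.
Qed.

End Homogenization.

Section HomogenizedDerivations.
Variables (K : fieldType) (n : nat).
Local Notation S := {mpoly K[n]}.
Local Notation T := {mpoly K[n.+1]}.
Local Notation wi := (widen_ord (leqnSn n)).

Definition der_dehomog (t : Der K n.+1) : Der K n := fun i => dehomog (t (wi i)).

Lemma dehomog_der_app (t : Der K n.+1) (p : T) : t ord_max = 0 ->
  dehomog (der_app t p) = der_app (der_dehomog t) (dehomog p).
Proof.
move=> t0; rewrite /der_app big_ord_recr /= t0 mul0r addr0 rmorph_sum.
by apply: eq_bigr => i _; rewrite rmorphM /= dehomog_mderiv.
Qed.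

Lemma der_homog_max (d : Der K n) : der_homog d ord_max = 0.
Proof. by rewrite /der_homog unlift_none. Qed.

Lemma der_homog_wi (d : Der K n) i : der_homog d (wi i) =
  hvar K n ^+ (\max_(i' < n) tdeg (d i') - tdeg (d i)) * homogp (d i).
Proof. by rewrite /der_homog unlift_wi. Qed.

Lemma der_homogK (d : Der K n) i : der_dehomog (der_homog d) i = d i.
Proof.
by rewrite /der_dehomog der_homog_wi rmorphM rmorphXn /= dehomog_hvar expr1n mul1r homogpK.
Qed.

Lemma der_homog_homog (d : Der K n) i :
  der_homog d (wi i) \is (\max_(i' < n) tdeg (d i')).-homog.
Proof.
rewrite der_homog_wi -[X in X.-homog](@subnK (tdeg (d i))).
  exact: dhomogM (hvarXn_homog _ _ _) (homogp_homog _).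
exact: (leq_bigmax_cond (F := fun i' => tdeg (d i'))).
Qed.

Lemma der_app_homogp (d : Der K n) g : exists e,
  der_app (der_homog d) (homogp g) = hvar K n ^+ e * homogp (der_app d g).
Proof.
set E := \max_(i' < n) tdeg (d i').
have app_homog : der_app (der_homog d) (homogp g) \is (E + (tdeg g).-1).-homog.
  apply: rpred_sum => j _.
  case: (unliftP ord_max j) => [i ->|->]; last by rewrite der_homog_max mul0r rpred0.
  rewrite lift_max_wi; apply: dhomogM; first exact: der_homog_homog.
  exact/mderiv_homog/homogp_homog.
rewrite (dhomog_homogpE app_homog) dehomog_der_app ?der_homog_max // homogpK.
by eexists; congr (_ * homogp _); apply: eq_bigr => i _; rewrite der_homogK.
Qed.

Lemma inD_homogp_der_homog (f : S) (d : Der K n) :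
  f != 0 -> inD f d -> inD (homogp f) (der_homog d).
Proof.
move=> nz_f fd g e g_irr e_gt0 dvd ndvd.
have gE : g = homogp (dehomog g).
  have [r E] := dvd; apply: (homogp_factor nz_f (q := g ^+ e.-1 * r)).
  by rewrite E mulrA -exprS prednK.
set G := dehomog g in gE.
have G_irr : mirreducible G by rewrite -mirreducible_homogp -gE.
have dvdG : mdvd (G ^+ e) f by apply/mdvd_homogp; rewrite homogpX -gE.
have ndvdG : ~ mdvd (G ^+ e.+1) f by move/mdvd_homogp; rewrite homogpX -gE.
have [q qE] := fd _ _ G_irr e_gt0 dvdG ndvdG.
have [k kE] := der_app_homogp d G.
rewrite /inDe gE kE qE homogpM homogpX.
by exists (hvar K n ^+ k * homogp q); rewrite mulrCA.
Qed.

Lemma inD_der_dehomog (f : S) (t : Der K n.+1) :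
  inD (homogp f) t -> t ord_max = 0 -> inD f (der_dehomog t).
Proof.
move=> ft t0 G e G_irr e_gt0 dvd ndvd.
have [q qE] : inDe (homogp G) e t.
  apply: ft => //; first by rewrite mirreducible_homogp.
    by rewrite -homogpX; apply/mdvd_homogp.
  by rewrite -homogpX => /mdvd_homogp.
exists (dehomog q).
by rewrite -(homogpK G) -dehomog_der_app // qE rmorphM rmorphXn.
Qed.

Lemma dhomog_der_homogE (t : Der K n.+1) d :
  (forall j, t j \is d.-homog) -> t ord_max = 0 -> der_nonzero t ->
  der_nonzero (der_dehomog t) /\ forall j, t j =
    hvar K n ^+ (d - \max_(i < n) tdeg (der_dehomog t i)) * der_homog (der_dehomog t) j.
Proof.
move=> t_d t0 [j0 nz_j0].
have le_d i : (tdeg (der_dehomog t i) <= d)%N := tdeg_dehomog (t_d (wi i)).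
have tE i : t (wi i) = hvar K n ^+ (d - tdeg (der_dehomog t i)) * homogp (der_dehomog t i).
  exact: dhomog_homogpE (t_d (wi i)).
split.
  case: (unliftP ord_max j0) nz_j0 => [i ->|->]; last by rewrite t0 eqxx.
  rewrite lift_max_wi => nz; exists i; apply: contraNneq nz => ti0.
  by rewrite tE ti0 -mpolyC0 homogpC mulr0.
move=> j; case: (unliftP ord_max j) => [i ->|->]; last by rewrite t0 der_homog_max mulr0.
rewrite lift_max_wi der_homog_wi {1}tE mulrA -exprD.
have le_max : (tdeg (der_dehomog t i) <= \max_(i' < n) tdeg (der_dehomog t i'))%N.
  exact: (leq_bigmax_cond (F := fun i' => tdeg (der_dehomog t i'))).
have max_d : (\max_(i' < n) tdeg (der_dehomog t i') <= d)%N.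
  by apply/bigmax_leqP => i' _; apply: le_d.
have le_di := le_d i; congr (_ ^+ _ * _); lia.
Qed.

Lemma inDh0 (f : S) (t : Der K n.+1) : (forall j, t j = 0) -> inDh f t.
Proof.
by move=> t0; exists 0%N, (fun _ => 0), (fun _ _ => 0); split=> [[]//|j]; rewrite t0 big_ord0.
Qed.

Lemma inDhD (f : S) (t t1 t2 : Der K n.+1) :
  inDh f t1 -> inDh f t2 -> (forall j, t j = t1 j + t2 j) -> inDh f t.
Proof.
move=> [N1 [c1 [ds1 [ds1f t1E]]]] [N2 [c2 [ds2 [ds2f t2E]]]] tE.
pose pick T (x1 : 'I_N1 -> T) (x2 : 'I_N2 -> T) (l : 'I_(N1 + N2)) : T :=
  match split l with inl a => x1 a | inr b => x2 b end.
have pick_l T x1 x2 (a : 'I_N1) : pick T x1 x2 (lshift N2 a) = x1 a.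
  by rewrite /pick (unsplitK (inl a)).
have pick_r T x1 x2 (b : 'I_N2) : pick T x1 x2 (rshift N1 b) = x2 b.
  by rewrite /pick (unsplitK (inr b)).
exists (N1 + N2)%N, (pick _ c1 c2), (pick _ ds1 ds2); split.
  by move=> l; rewrite /pick; case: (split l).
move=> j; rewrite tE t1E t2E big_split_ord.
by congr (_ + _); apply: eq_bigr => l _; rewrite ?pick_l ?pick_r.
Qed.

Lemma inDh_sum (f : S) I (r : seq I) (ts : I -> Der K n.+1) (t : Der K n.+1) :
  (forall i, inDh f (ts i)) -> (forall j, t j = \sum_(i <- r) ts i j) -> inDh f t.
Proof.
move=> tsf; elim: r t => [|x r IH] t tE; first by apply: inDh0 => j; rewrite tE big_nil.
apply: (inDhD (tsf x) (IH _ (fun j => erefl))) => j.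
by rewrite tE big_cons.
Qed.

Lemma inDh_homog (f : S) (t : Der K n.+1) d :
  (forall j, t j \is d.-homog) -> t ord_max = 0 -> inD f (der_dehomog t) -> inDh f t.
Proof.
move=> t_d t0 ft; have [nz_t|] := boolP [exists j, t j != 0]; last first.
  by move=> /existsPn t_eq0; apply: inDh0 => j; apply/eqP/negPn/t_eq0.
have [nz_dt tE] := dhomog_der_homogE t_d t0 (existsP nz_t).
exists 1%N, (fun _ => hvar K n ^+ (d - \max_(i < n) tdeg (der_dehomog t i))).
by exists (fun _ => der_dehomog t); split=> // j; rewrite big_ord1 tE.
Qed.

End HomogenizedDerivations.

Theorem mainTheorem13 (K : fieldType) (charK0 : [pchar K] =i pred0) (n : nat)
  (f : {mpoly K[n]}) (hf : f != 0) (t : Der K n.+1) :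
  (inD (homogp f) t /\ t ord_max = 0) <-> inDh f t.
Proof.
split=> [[ft t0]|[N [c [ds [dsf tE]]]]].
- have [B tE] := der_pihomog_partition t.
  apply: (inDh_sum _ tE) => d.
  have td0 : der_pihomog t d ord_max = 0 by rewrite /der_pihomog t0 raddf0.
  apply: (inDh_homog (d := d)) => // [j|]; first exact: pihomogP.
  apply: inD_der_dehomog td0; apply: inD_der_pihomog ft.
  - by rewrite homogp_eq0.
  - exact: homogp_homog.
- split; last by rewrite tE big1 // => l _; rewrite der_homog_max mulr0.
  by apply: (inD_comb _ tE) => l; apply: inD_homogp_der_homog hf (proj2 (dsf l)).
Qed.
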